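(* Let $\mathcal H$ be a well-structured preconditioner set. For all $M_1,M_2\in\mathcal S^d_{++}$, $P_{\mathcal H}(M_1+M_2)^2=P_{\mathcal H}(M_1)^2+P_{\mathcal H}(M_2)^2$; for every $M\in\mathcal S^d_{++}$ and $c>0$, $P_{\mathcal H}(cM)^2=cP_{\mathcal H}(M)^2$; and for all $A,B\in\mathcal S^d_{++}$ with $A\preceq B$, $P_{\mathcal H}(A)\preceq P_{\mathcal H}(B)$.
   Context: $\mathcal S^d_+$ (resp. $\mathcal S^d_{++}$) denotes the set of real symmetric positive semidefinite (resp. positive definite) $d\times d$ matrices; $\langle A,B\rangle=\operatorname{Tr}(A^\top B)$. A set $\mathcal H\subseteq\mathcal S_+^d$ is a well-structured preconditioner set if $\mathcal H=\mathcal S_+^d\cap\mathcal K$ for some set $\mathcal K$ of real $d\times d$ matrices that is closed under scalar multiplication, matrix addition and matrix multiplication and contains the identity $I_d$. For $M\in\mathcal S^d_{++}$, $P_{\mathcal H}(M):=\arg\min_{H\in\mathcal H\cap\mathcal S^d_{++}}\langle M,H^{-1}\rangle+\operatorname{Tr}(H)$ (the minimizer exists and is unique). *)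

From mathcomp Require Import all_boot all_order all_algebra.
From mathcomp Require Import boolp classical_sets reals.
Set Implicit Arguments. Unset Strict Implicit. Unset Printing Implicit Defensive.
Import Order.TTheory GRing.Theory Num.Theory.
Local Open Scope ring_scope.
Local Open Scope classical_set_scope.

Section Defs.
Variables (R : realType) (d : nat).

Definition psd (A : 'M[R]_d) : Prop :=
  A^T = A /\ forall v : 'rV[R]_d, 0 <= (v *m A *m v^T) 0 0.

Definition pd (A : 'M[R]_d) : Prop :=
  A^T = A /\ forall v : 'rV[R]_d, v != 0 -> 0 < (v *m A *m v^T) 0 0.

Definition loewner_le (A B : 'M[R]_d) : Prop := psd (B - A).

Definition frob (A B : 'M[R]_d) : R := \tr (A^T *m B).

Definition matrix_algebra_set (K : 'M[R]_d -> Prop) : Prop :=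
  [/\ forall (c : R) A, K A -> K (c *: A),
      forall A B, K A -> K B -> K (A + B),
      forall A B, K A -> K B -> K (A *m B)
    & K 1%:M].

Definition precond_set (K : 'M[R]_d -> Prop) (H : 'M[R]_d) : Prop :=
  psd H /\ K H.

Definition precond_obj (M H : 'M[R]_d) : R := frob M (invmx H) + \tr H.

Definition is_PH (K : 'M[R]_d -> Prop) (M H : 'M[R]_d) : Prop :=
  (precond_set K H /\ pd H) /\
  forall H', precond_set K H' -> pd H' -> precond_obj M H <= precond_obj M H'.

(* P_H(M): the (unique, existing) minimizer, picked by classical choice *)
Definition PH (K : 'M[R]_d -> Prop) (M : 'M[R]_d) : 'M[R]_d :=
  xget 0 [set H | is_PH K M H].

End Defs.

From mathcomp Require Import all_boot all_order all_algebra.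
From mathcomp Require Import boolp classical_sets reals.
From mathcomp Require Import spectral.
From mathcomp.real_closed Require Import complex.
From mathcomp Require Import zify ring.
Import Order.TTheory GRing.Theory Num.Theory.
Local Open Scope ring_scope.
Set Implicit Arguments. Unset Strict Implicit. Unset Printing Implicit Defensive.

(* Let S be the space of symmetric matrices in K.  Since K is closed under
   polynomials, S contains the polynomials, hence the square roots and
   inverses, of its positive definite elements.  Completing the square in the
   objective shows that P_H(M) is the positive square root of the
   Frobenius-orthogonal projection of M onto S, so P_H(M)^2 is linear in M.
   That projection N preserves (semi)definiteness, because
   tr (N X^2) = tr (M X^2) for every polynomial X in N; monotonicity then
   follows from the monotonicity of the matrix square root.  The spectral
   calculus of real symmetric matrices is obtained by complexification. *)

Section SymmetricCalculus.
Variable R : realType.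

Lemma poly_interpolation (s : seq R) (f : R -> R) :
  exists p : {poly R}, forall x, x \in s -> p.[x] = f x.
Proof.
elim: s => [|a s [p Hp]]; first by exists 0.
have [ains|anotin] := boolP (a \in s).
  by exists p => x; rewrite inE => /orP[/eqP->|]; apply: Hp.
pose q := \prod_(y <- s) ('X - y%:P).
have qa : q.[a] != 0.
  rewrite horner_prod prodf_seq_neq0; apply/allP => y ys.
  by rewrite hornerXsubC subr_eq0; apply: contraNneq anotin => ->.
have qy y : y \in s -> q.[y] = 0 by move=> ys; apply/rootP; rewrite root_prod_XsubC.
exists (p + ((f a - p.[a]) / q.[a]) *: q) => x; rewrite inE => /orP[/eqP->|xs].
  by rewrite hornerD hornerZ mulfVK // addrC subrK.
by rewrite hornerD hornerZ (qy x xs) mulr0 addr0 Hp.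
Qed.

Lemma horner_mx_trmx n (A : 'M[R]_n.+1) (p : {poly R}) :
  (horner_mx A p)^T = horner_mx A^T p.
Proof.
elim/poly_ind: p => [|p c IH]; first by rewrite !rmorph0 trmx0.
rewrite !rmorphD !rmorphM /= !horner_mx_X !horner_mx_C linearD /= trmx_mul IH.
by rewrite tr_scalar_mx; congr (_ + _); apply: (@comm_mx_horner _ _ A^T A^T).
Qed.

(* [F f] plays the role of [f(N)], where [r] lists the eigenvalues of [N]. *)
Record sym_calculus n (N : 'M[R]_n.+1) (r : 'rV[R]_n.+1)
    (F : (R -> R) -> 'M[R]_n.+1) : Prop := SymCalculus {
  calc_poly : forall f, exists p, F f = horner_mx N p;
  calc_mul : forall f g, F f *m F g = F (fun x => f x * g x);
  calc_id : F id = N;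
  calc_const : forall c, F (fun _ => c) = c%:M;
  calc_tr : forall f, (F f)^T = F f;
  calc_eq0 : forall f i, F f = 0 -> f (r 0 i) = 0;
  calc_ext : forall f g, (forall i, f (r 0 i) = g (r 0 i)) -> F f = F g }.

Section DiagonalisedCalculus.
Variables (L : fieldType) (emb : {rmorphism R -> L}).
Local Notation cx A := (map_mx emb A).
Variables (n : nat) (N : 'M[R]_n.+1) (U : 'M[L]_n.+1) (r : 'rV[R]_n.+1).
Hypotheses (U_unit : U \in unitmx) (N_sym : N^T = N)
  (N_diag : cx N = invmx U *m diag_mx (cx r) *m U).
Variable interp : (R -> R) -> {poly R}.
Hypothesis interpE : forall f i, (interp f).[r 0 i] = f (r 0 i).

Let conj_diag (d : 'rV[L]_n.+1) := invmx U *m diag_mx d *m U.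
Let spec f : 'rV[L]_n.+1 := \row_i emb (f (r 0 i)).

Let map_calc f : cx (horner_mx N (interp f)) = conj_diag (spec f).
Proof.
have -> : spec f = map_mx (horner (map_poly emb (interp f))) (cx r).
  by apply/rowP => i; rewrite !mxE horner_map interpE.
by rewrite /conj_diag -horner_mx_diag -horner_mx_uconjC // -N_diag map_horner_mx.
Qed.

Let conj_diag_mul d e : conj_diag d *m conj_diag e = conj_diag (\row_i (d 0 i * e 0 i)).
Proof.
by rewrite /conj_diag !mulmxA mulmxK // -(mulmxA _ (diag_mx d)) mulmx_diag.
Qed.

Let conj_diag_scalar c : conj_diag (const_mx c) = c%:M.
Proof. by rewrite /conj_diag diag_const_mx mul_mx_scalar -scalemxAl mulVmx ?scalemx1. Qed.

Let calc_map_inj f g : spec f = spec g -> horner_mx N (interp f) = horner_mx N (interp g).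
Proof. by move=> e; apply: (@map_mx_inj _ _ emb); rewrite !map_calc e. Qed.

Lemma diagonalised_calculus : sym_calculus N r (fun f => horner_mx N (interp f)).
Proof.
split.
- by move=> f; exists (interp f).
- move=> f g; apply: (@map_mx_inj _ _ emb).
  rewrite map_mxM !map_calc conj_diag_mul; congr conj_diag.
  by apply/rowP => i; rewrite !mxE rmorphM.
- apply: (@map_mx_inj _ _ emb); rewrite map_calc N_diag; congr conj_diag.
  by apply/rowP => i; rewrite !mxE.
- move=> c; apply: (@map_mx_inj _ _ emb); rewrite map_calc map_scalar_mx -conj_diag_scalar.
  by congr conj_diag; apply/rowP => i; rewrite !mxE.
- by move=> f; rewrite horner_mx_trmx N_sym.
- move=> f i Ff0; apply: (fmorph_inj emb); rewrite rmorph0.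
  have /(congr1 (fun X => U *m X *m invmx U)) : conj_diag (spec f) = 0.
    by rewrite -map_calc Ff0 map_mx0.
  rewrite /conj_diag !mulmxA mulmxV // mul1mx -mulmxA mulmxV // mulmx1 mulmx0 mul0mx.
  by move=> /matrixP /(_ i i); rewrite !mxE eqxx mulr1n.
- by move=> f g e; apply: calc_map_inj; apply/rowP => i; rewrite !mxE e.
Qed.

End DiagonalisedCalculus.

Local Notation C := R[i].
Local Notation emb := (real_complex R).
Local Notation cx A := (map_mx emb A).

Lemma real_complex_real (x : R) : emb x \is Num.real.
Proof.
rewrite realE ler0c -oppr_ge0 -rmorphN ler0c oppr_ge0.
by have := num_real x; rewrite realE.
Qed.

Lemma symmx_spectral n (N : 'M[R]_n) : N^T = N ->
  exists (U : 'M[C]_n) (r : 'rV[R]_n),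
    U \in unitmx /\ cx N = invmx U *m diag_mx (cx r) *m U.
Proof.
move=> Nsym.
have herm : cx N \is hermsymmx.
  apply: realsym_hermsym.
    by rewrite qualifE; apply/eqP; rewrite expr0 scale1r map_mx_id // map_trmx Nsym.
  by apply/mxOverP => i j; rewrite mxE real_complex_real.
have /orthomx_spectralP := hermitian_normalmx herm.
have /mxOverP sreal := hermitian_spectral_diag_real herm.
set P := spectralmx _; set sp := spectral_diag _ => eqN.
exists P, (map_mx (@complex.Re R) sp); split; first exact: spectral_unit.
suff -> : cx (map_mx (@complex.Re R) sp) = sp by [].
by apply/matrixP => i j; rewrite !mxE complexRe; apply/Creal_ReP/sreal.
Qed.

Lemma sym_calculus_exists n (N : 'M[R]_n.+1) : N^T = N -> exists r F, sym_calculus N r F.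
Proof.
move=> Nsym; have [U [r [Uu eN]]] := symmx_spectral Nsym.
have [interp interpE] := choice (fun f => poly_interpolation [seq r 0 i | i : 'I_n.+1] f).
exists r, (fun f => horner_mx N (interp f)).
apply: (diagonalised_calculus Uu Nsym eN) => f i.
by apply: interpE; apply/mapP; exists i; rewrite ?mem_enum.
Qed.

End SymmetricCalculus.

Section QuadraticForms.
Variable R : realType.

Lemma mulmx_trmx_ge0 m (u : 'rV[R]_m) : 0 <= (u *m u^T) 0 0.
Proof. by rewrite mxE; apply: sumr_ge0 => j _; rewrite mxE -expr2 sqr_ge0. Qed.

Lemma mulmx_trmx_eq0 m (u : 'rV[R]_m) : (u *m u^T) 0 0 = 0 -> u = 0.
Proof.
rewrite mxE => /psumr_eq0P u0; apply/rowP => j; rewrite mxE.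
have /(_ j isT)/eqP : forall i, true -> u 0 i * u^T i 0 = 0.
  by apply: u0 => i _; rewrite mxE -expr2 sqr_ge0.
by rewrite mxE mulf_eq0 orbb => /eqP.
Qed.

Lemma psd_sym m (A : 'M[R]_m) : psd A -> A^T = A. Proof. by case. Qed.

Lemma pd_sym m (A : 'M[R]_m) : pd A -> A^T = A. Proof. by case. Qed.

Lemma pd_psd m (A : 'M[R]_m) : pd A -> psd A.
Proof.
case=> sA pA; split => // v; have [->|v0] := eqVneq v 0; last exact/ltW/pA.
by rewrite !mul0mx mxE.
Qed.

Lemma pd1 m : pd (1%:M : 'M[R]_m).
Proof.
split=> [|v v0]; first exact: trmx1.
rewrite mulmx1 lt_def mulmx_trmx_ge0 andbT.
by apply: contraNneq v0 => /mulmx_trmx_eq0 ->.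
Qed.

Lemma mxtrace_conj m k (X : 'M[R]_(m, k)) (P : 'M[R]_k) :
  \tr (X *m P *m X^T) = \sum_i (row i X *m P *m (row i X)^T) 0 0.
Proof.
apply: eq_bigr => i _; rewrite -row_mul tr_row !mxE.
by apply: eq_bigr => j _; rewrite !mxE.
Qed.

Lemma mxtrace_conj_ge0 m k (X : 'M[R]_(m, k)) (P : 'M[R]_k) :
  psd P -> 0 <= \tr (X *m P *m X^T).
Proof. by case=> _ pP; rewrite mxtrace_conj; apply: sumr_ge0 => i _; apply: pP. Qed.

Lemma mxtrace_conj_gt0 m k (X : 'M[R]_(m, k)) (P : 'M[R]_k) :
  pd P -> X != 0 -> 0 < \tr (X *m P *m X^T).
Proof.
move=> pP X0; have /existsP [i Xi] : [exists i, row i X != 0].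
  apply: contraNT X0 => /existsPn Xrow0; apply/eqP/row_matrixP => i.
  by rewrite row0; apply/eqP/negbNE.
rewrite mxtrace_conj (bigD1 i) //=; apply: ltr_pwDl; first by case: pP => _; apply.
by apply: sumr_ge0 => j _; case: (pd_psd pP) => _; apply.
Qed.

Lemma mxtrace_mul_trmx_gt0 m k (X : 'M[R]_(m, k)) : X != 0 -> 0 < \tr (X *m X^T).
Proof. by move=> X0; have := mxtrace_conj_gt0 (pd1 k) X0; rewrite mulmx1. Qed.

Lemma pdD m (A B : 'M[R]_m) : pd A -> pd B -> pd (A + B).
Proof.
move=> [AT pA] [BT pB]; split=> [|v v0]; first by rewrite linearD /= AT BT.
by rewrite mulmxDr mulmxDl mxE addr_gt0 ?pA ?pB.
Qed.

Lemma pdZ m c (A : 'M[R]_m) : 0 < c -> pd A -> pd (c *: A).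
Proof.
move=> c0 [AT pA]; split=> [|v v0]; first by rewrite linearZ /= AT.
by rewrite -scalemxAr -scalemxAl mxE mulr_gt0 ?pA.
Qed.

Lemma psd_mx0 (A : 'M[R]_0) : psd A.
Proof. by split=> [|v]; rewrite ?flatmx0 // !mxE big_ord0. Qed.

End QuadraticForms.

Section EigenMatrices.
Variables (R : realType) (n : nat).
Implicit Types (N E X : 'M[R]_n) (l : R).

Definition sym_eigenmx N l E := [/\ E^T = E, E != 0 & N *m E = l *: E].

Lemma sym_eigenmx_mulr N l E : N^T = N -> sym_eigenmx N l E -> E *m N = l *: E.
Proof. by move=> NT [ET _ NE]; rewrite -[E]ET -NT -trmx_mul NE linearZ. Qed.

Lemma sym_eigenmx_trace N l E :
  sym_eigenmx N l E -> \tr (N *m E *m E) = l * \tr (E *m E^T).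
Proof. by case=> ET _ NE; rewrite NE -scalemxAl mxtraceZ ET. Qed.

Lemma pd_sym_eigenmx_gt0 N l E : pd N -> sym_eigenmx N l E -> 0 < l.
Proof.
move=> pN eNE; have [ET E0 _] := eNE.
have := mxtrace_conj_gt0 pN E0.
rewrite -mulmxA mxtrace_mulC -mulmxA ET mulmxA (sym_eigenmx_trace eNE).
by rewrite pmulr_lgt0 // mxtrace_mul_trmx_gt0.
Qed.

End EigenMatrices.

Section CalculusProperties.
Variables (R : realType) (n : nat).
Variables (N : 'M[R]_n.+1) (r : 'rV[R]_n.+1) (F : (R -> R) -> 'M[R]_n.+1).
Hypothesis HF : sym_calculus N r F.

Lemma calc_scale c f : c *: F f = F (fun x => c * f x).
Proof. by rewrite -mul_scalar_mx -(calc_const HF) (calc_mul HF). Qed.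

Lemma calc_sqr_sqrt f : (forall i, 0 <= f (r 0 i)) ->
  F (fun x => Num.sqrt (f x)) *m F (fun x => Num.sqrt (f x)) = F f.
Proof.
by move=> f_ge0; rewrite (calc_mul HF); apply: (calc_ext HF) => i; rewrite -expr2 sqr_sqrtr.
Qed.

Lemma calc_psd f : (forall i, 0 <= f (r 0 i)) -> psd (F f).
Proof.
move=> f_ge0; split=> [|v]; first exact: (calc_tr HF).
rewrite -(calc_sqr_sqrt f_ge0) -{2}(calc_tr HF) mulmxA -mulmxA -trmx_mul.
exact: mulmx_trmx_ge0.
Qed.

Lemma calc_pd f : (forall i, 0 < f (r 0 i)) -> pd (F f).
Proof.
move=> f_gt0; have f_ge0 i := ltW (f_gt0 i).
set s := F (fun x => Num.sqrt (f x)).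
have s_inv : s *m F (fun x => (Num.sqrt (f x))^-1) = 1%:M.
  rewrite (calc_mul HF) -(calc_const HF); apply: (calc_ext HF) => i.
  by rewrite mulfV // gt_eqF // sqrtr_gt0.
split=> [|v v0]; first exact: (calc_tr HF).
rewrite -(calc_sqr_sqrt f_ge0) -{2}(calc_tr HF) mulmxA -mulmxA -trmx_mul.
rewrite lt_def mulmx_trmx_ge0 andbT; apply: contraNneq v0 => /mulmx_trmx_eq0 vs0.
by rewrite -[v]mulmx1 -s_inv mulmxA vs0 mul0mx.
Qed.

Lemma calc_sym_eigenmx i : sym_eigenmx N (r 0 i) (F (fun x => (x == r 0 i)%:R)).
Proof.
split; first exact: (calc_tr HF).
  by apply/eqP => /(calc_eq0 HF i); rewrite eqxx; apply/eqP/oner_neq0.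
rewrite -{1}(calc_id HF) (calc_mul HF) calc_scale; apply: (calc_ext HF) => j /=.
by have [->|] := eqVneq (r 0 j) (r 0 i); rewrite ?mulr1 ?mulr0.
Qed.

End CalculusProperties.

Section SpectralCriteria.
Variables (R : realType) (n : nat).
Implicit Types N : 'M[R]_n.+1.

Lemma psd_of_sym_eigenmx N : N^T = N ->
  (forall l E, (exists p, E = horner_mx N p) -> sym_eigenmx N l E -> 0 <= l) -> psd N.
Proof.
move=> NT l_ge0; have [r [F HF]] := sym_calculus_exists NT.
rewrite -(calc_id HF); apply: (calc_psd HF) => i.
exact: l_ge0 (calc_poly HF _) (calc_sym_eigenmx HF i).
Qed.

Lemma pd_of_sym_eigenmx N : N^T = N ->
  (forall l E, (exists p, E = horner_mx N p) -> sym_eigenmx N l E -> 0 < l) -> pd N.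
Proof.
move=> NT l_gt0; have [r [F HF]] := sym_calculus_exists NT.
rewrite -(calc_id HF); apply: (calc_pd HF) => i.
exact: l_gt0 (calc_poly HF _) (calc_sym_eigenmx HF i).
Qed.

Lemma psd_of_trace N : N^T = N ->
  (forall p, 0 <= \tr (N *m horner_mx N p *m horner_mx N p)) -> psd N.
Proof.
move=> NT tr_ge0; apply: psd_of_sym_eigenmx => // l E [p ->] eNE.
have := tr_ge0 p; rewrite (sym_eigenmx_trace eNE) pmulr_lge0 //.
by apply: mxtrace_mul_trmx_gt0; case: eNE.
Qed.

Lemma pd_of_trace N : N^T = N ->
  (forall p, horner_mx N p != 0 ->
     0 < \tr (N *m horner_mx N p *m horner_mx N p)) -> pd N.
Proof.
move=> NT tr_gt0; apply: pd_of_sym_eigenmx => // l E [p Ep] eNE.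
have [_ E0 _] := eNE; have := tr_gt0 p; rewrite -Ep (sym_eigenmx_trace eNE).
by rewrite pmulr_lgt0 ?mxtrace_mul_trmx_gt0 //; apply.
Qed.

Lemma pd_sqrt N : pd N -> exists H, [/\ pd H, H *m H = N & exists p, H = horner_mx N p].
Proof.
move=> pN; have [r [F HF]] := sym_calculus_exists (pd_sym pN).
have r_gt0 i := pd_sym_eigenmx_gt0 pN (calc_sym_eigenmx HF i).
exists (F (fun x => Num.sqrt x)); split; last exact: (calc_poly HF).
  by apply: (calc_pd HF) => i; rewrite sqrtr_gt0.
by rewrite (calc_sqr_sqrt HF (fun i => ltW (r_gt0 i))) (calc_id HF).
Qed.

Lemma pd_invmx_horner N : pd N -> N \in unitmx /\ exists p, invmx N = horner_mx N p.
Proof.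
move=> pN; have [r [F HF]] := sym_calculus_exists (pd_sym pN).
have r_gt0 i := pd_sym_eigenmx_gt0 pN (calc_sym_eigenmx HF i).
have NF : N *m F (fun x => x^-1) = 1%:M.
  rewrite -{1}(calc_id HF) (calc_mul HF) -(calc_const HF); apply: (calc_ext HF) => i.
  by rewrite mulfV // gt_eqF.
have Nu : N \in unitmx by case: (mulmx1_unit NF).
split=> //; have [p Fp] := calc_poly HF (fun x => x^-1); exists p.
by rewrite -Fp -[LHS]mulmx1 -NF mulKmx.
Qed.

Lemma pd_invmx N : pd N -> pd (invmx N).
Proof.
move=> pN; have [Nu _] := pd_invmx_horner pN; case: pN => NT pN.
split=> [|v v0]; first by rewrite trmx_inv NT.
have w0 : v *m invmx N != 0.
  by apply: contraNneq v0 => vN0; rewrite -[v]mulmx1 -(mulVmx Nu) mulmxA vN0 mul0mx.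
have := pN _ w0; rewrite -(mulmxA v) mulVmx // mulmx1 trmx_mul trmx_inv NT.
by rewrite mulmxA.
Qed.

(* If [C = B - A] had a negative eigenvalue [l] with eigenmatrix [E], then
   [tr (E (B^2 - A^2) E) = l (tr (E B E) + tr (E A E)) < 0]. *)
Lemma loewner_le_of_sqr (A B : 'M[R]_n.+1) : pd A -> pd B ->
  loewner_le (A *m A) (B *m B) -> loewner_le A B.
Proof.
move=> pA pB pAB; set C := B - A.
have CT : C^T = C by rewrite linearB /= (pd_sym pA) (pd_sym pB).
apply: psd_of_sym_eigenmx => // l E _ eCE; have [ET E0 CE] := eCE.
have EC := sym_eigenmx_mulr CT eCE.
have := mxtrace_conj_ge0 E pAB.
have -> : B *m B - A *m A = B *m C + C *m A by rewrite mulmxBr mulmxBl addrA subrK.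
rewrite mulmxDr mulmxDl mxtraceD ET -!mulmxA CE (mulmxA E C) EC.
rewrite -scalemxAr -!scalemxAl -scalemxAr !mxtraceZ -mulrDr pmulr_lge0 //.
by rewrite -{2 4}ET !mulmxA addr_gt0 // mxtrace_conj_gt0.
Qed.

End SpectralCriteria.

Section SubspaceProjection.
Variables (R : realType) (k : nat) (P : 'rV[R]_k -> Prop).
Hypotheses (P0 : P 0) (P_lin : forall a u v, P u -> P v -> P (a *: u + v)).

Let basis_completion t p (B : 'M[R]_(p, k)) : (forall u, P (u *m B)) ->
    (k - \rank B <= t)%N ->
  exists p' (B' : 'M[R]_(p', k)), (forall u, P (u *m B')) /\ forall x, P x -> (x <= B')%MS.
Proof.
elim: t p B => [|t IH] p B PB rkB.
  exists p, B; split=> // x _; apply: submx_full.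
  by rewrite /row_full eqn_leq rank_leq_col -subn_eq0 -leqn0.
have [B_spans|] := pselect (forall x, P x -> (x <= B)%MS); first by exists p, B.
move=> /existsNP [x /not_implyP [Px xB]].
apply: (IH _ (col_mx B x)).
  move=> u; rewrite -[u]hsubmxK mul_row_col [rsubmx u]mx11_scalar mul_scalar_mx addrC.
  exact: P_lin.
have : (\rank B < \rank (col_mx B x))%N.
  rewrite -addsmxE; have /leqifP := mxrank_leqif_sup (addsmxSl B x).
  by case: ifP => //; rewrite addsmx_sub => /andP[_ /xB].
by have := rank_leq_col (col_mx B x); move: rkB; lia.
Qed.

Lemma subspace_row_basis :
  exists p (B : 'M[R]_(p, k)), (forall u, P (u *m B)) /\ forall x, P x -> (x <= B)%MS.
Proof.
by apply: (@basis_completion k 0 0) => [u|]; rewrite ?mulmx0 ?leq_subr.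
Qed.

Lemma orthogonal_projection_exists (m : 'rV[R]_k) :
  exists y, P y /\ forall x, P x -> ((m - y) *m x^T) 0 0 = 0.
Proof.
have [p [B [PB B_spans]]] := subspace_row_basis.
move: (row_base_free B) (eq_row_base B); move: (row_base B) => Bf Bf_free eqB.
pose G := Bf *m Bf^T.
have G_unit : G \in unitmx.
  rewrite unitmxE unitfE; apply/negP => /det0P [w w0 wG].
  move/negP: w0; apply; rewrite -(mulmx_free_eq0 _ Bf_free); apply/eqP/mulmx_trmx_eq0.
  by rewrite trmx_mul !mulmxA -(mulmxA w) -/G wG mul0mx mxE.
exists (m *m Bf^T *m invmx G *m Bf); split.
  have /submxP [D ->] : (m *m Bf^T *m invmx G *m Bf <= B)%MS.
    by rewrite -eqB submxMl.
  exact: PB.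
move=> x /B_spans; rewrite -eqB => /submxP [D ->].
by rewrite trmx_mul mulmxA mulmxBl -!mulmxA -/G mulVmx // mulmx1 subrr mul0mx mxE.
Qed.

End SubspaceProjection.

Section Frobenius.
Variables (R : realType) (n : nat).
Implicit Types X Y Z : 'M[R]_n.

Lemma frob_mxvec X Y : frob X Y = (mxvec X *m (mxvec Y)^T) 0 0.
Proof.
rewrite mxE (reindex (uncurry (@mxvec_index n n))); last exact: curry_mxvec_bij.
rewrite /frob /mxtrace (eq_bigr (fun j => \sum_i X i j * Y i j)); last first.
  by move=> j _; rewrite mxE; apply: eq_bigr => i _; rewrite mxE.
rewrite exchange_big pair_bigA /=; apply: eq_bigr => -[i j] _ /=.
by rewrite !mxE !mxvecE.
Qed.

Lemma frobDl X Y Z : frob (X + Y) Z = frob X Z + frob Y Z.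
Proof. by rewrite /frob linearD /= mulmxDl mxtraceD. Qed.

Lemma frobBl X Y Z : frob (X - Y) Z = frob X Z - frob Y Z.
Proof. by rewrite /frob linearB /= mulmxBl raddfB. Qed.

Lemma frobZl c X Z : frob (c *: X) Z = c * frob X Z.
Proof. by rewrite /frob linearZ /= -scalemxAl mxtraceZ. Qed.

End Frobenius.

Section PreconditionerProjection.
Variables (R : realType) (n : nat) (K : 'M[R]_n.+1 -> Prop).
Hypothesis HK : matrix_algebra_set K.
Implicit Types (A N H X Y : 'M[R]_n.+1).

Let K_scale c X : K X -> K (c *: X). Proof. by case: HK => + _ _ _; apply. Qed.
Let K_add X Y : K X -> K Y -> K (X + Y). Proof. by case: HK => _ + _ _; apply. Qed.
Let K_mul X Y : K X -> K Y -> K (X *m Y). Proof. by case: HK => _ _ + _; apply. Qed.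
Let K_one : K 1%:M. Proof. by case: HK. Qed.

Let K_horner X p : K X -> K (horner_mx X p).
Proof.
move=> KX; elim/poly_ind: p => [|p c IH].
  by rewrite rmorph0 -(scale0r 1%:M); apply/K_scale/K_one.
rewrite rmorphD rmorphM /= horner_mx_X horner_mx_C -scalemx1.
by apply: K_add; [apply: K_mul | apply/K_scale/K_one].
Qed.

Definition symK X := K X /\ X^T = X.

Lemma symK_horner X p : symK X -> symK (horner_mx X p).
Proof. by case=> KX XT; split; [apply: K_horner | rewrite horner_mx_trmx XT]. Qed.

Lemma symK_sqr X : symK X -> symK (X *m X).
Proof. by case=> KX XT; split; [apply: K_mul | rewrite trmx_mul XT]. Qed.

Lemma symK_lin a X Y : symK X -> symK Y -> symK (a *: X + Y).
Proof.
case=> KX XT [KY YT]; split; first by apply: K_add => //; apply: K_scale.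
by rewrite linearD linearZ /= XT YT.
Qed.

Lemma symK0 : symK 0.
Proof. by split; [rewrite -(scale0r 1%:M); apply/K_scale/K_one | rewrite trmx0]. Qed.

Lemma symK_invmx H : symK H -> pd H -> symK (invmx H).
Proof. by move=> KH /pd_invmx_horner [_ [p ->]]; apply: symK_horner. Qed.

Definition is_proj A N := symK N /\ forall X, symK X -> frob (A - N) X = 0.

Lemma proj_exists A : exists N, is_proj A N.
Proof.
pose P (v : 'rV[R]_(n.+1 * n.+1)) := symK (vec_mx v).
have P0 : P 0 by rewrite /P linear0; apply: symK0.
have P_lin a u v : P u -> P v -> P (a *: u + v).
  by move=> Pu Pv; rewrite /P linearP; apply: symK_lin.
have [y [Py y_orth]] := orthogonal_projection_exists P0 P_lin (mxvec A).
exists (vec_mx y); split=> // X KX.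
by rewrite frob_mxvec linearB /= vec_mxK y_orth // /P mxvecK.
Qed.

Lemma proj_unique A N1 N2 : is_proj A N1 -> is_proj A N2 -> N1 = N2.
Proof.
move=> [KN1 N1_orth] [KN2 N2_orth]; apply/eqP; rewrite -subr_eq0.
have KN12 : symK (N1 - N2) by rewrite -scaleN1r addrC; apply: symK_lin.
have N12E : (A - N2) - (A - N1) = N1 - N2 by rewrite addrC opprB addrA subrK.
have : frob (N1 - N2) (N1 - N2) = 0.
  by rewrite -{1}N12E frobBl N1_orth // N2_orth // subrr.
rewrite /frob mxtrace_mulC => N12_0; apply: contraT => N12.
by have := mxtrace_mul_trmx_gt0 N12; rewrite N12_0 ltxx.
Qed.

Lemma proj_trace A N X : A^T = A -> is_proj A N -> symK X -> \tr (N *m X) = \tr (A *m X).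
Proof.
move=> AT [[_ NT] N_orth] KX; apply/eqP; rewrite eq_sym -subr_eq0.
by have := N_orth X KX; rewrite frobBl /frob AT NT => ->.
Qed.

Lemma projD A1 A2 N1 N2 : is_proj A1 N1 -> is_proj A2 N2 -> is_proj (A1 + A2) (N1 + N2).
Proof.
move=> [KN1 N1_orth] [KN2 N2_orth]; split; first by rewrite -[N1]scale1r; apply: symK_lin.
by move=> X KX; rewrite opprD addrACA frobDl N1_orth // N2_orth // addr0.
Qed.

Lemma projZ c A N : is_proj A N -> is_proj (c *: A) (c *: N).
Proof.
move=> [KN N_orth]; split.
  by rewrite -[_ *: N]addr0; apply: symK_lin => //; apply: symK0.
by move=> X KX; rewrite -scalerBr frobZl N_orth // mulr0.
Qed.

Lemma proj_psd A N : psd A -> is_proj A N -> psd N.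
Proof.
move=> pA PN; have [KN _] := PN; apply: psd_of_trace => [|p]; first exact: (proj2 KN).
have KX := symK_horner p KN.
rewrite -mulmxA (proj_trace (psd_sym pA) PN (symK_sqr KX)) mulmxA mxtrace_mulC mulmxA.
by rewrite -{2}(proj2 KX); apply: mxtrace_conj_ge0.
Qed.

Lemma proj_pd A N : pd A -> is_proj A N -> pd N.
Proof.
move=> pA PN; have [KN _] := PN; apply: pd_of_trace => [|p X0]; first exact: (proj2 KN).
have KX := symK_horner p KN.
rewrite -mulmxA (proj_trace (pd_sym pA) PN (symK_sqr KX)) mulmxA mxtrace_mulC mulmxA.
by rewrite -{2}(proj2 KX); apply: mxtrace_conj_gt0.
Qed.

Lemma precond_obj_sqr A H0 H : A^T = A -> is_proj A (H0 *m H0) -> H0^T = H0 ->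
  symK H -> pd H ->
  precond_obj A H = (\tr H0) *+ 2 + \tr ((H0 - H) *m invmx H *m (H0 - H)^T).
Proof.
move=> AT PH0 H0T KH pH; have [Hu _] := pd_invmx_horner pH.
have -> : (H0 - H) *m invmx H *m (H0 - H)^T = H0 *m invmx H *m H0 - H0 - H0 + H.
  rewrite linearB /= H0T (pd_sym pH) !(mulmxBl, mulmxBr) mulmxV // mul1mx.
  by rewrite -(mulmxA H0 (invmx H) H) mulVmx // mulmx1 mul1mx opprB addrA addrAC.
rewrite /precond_obj /frob AT -(proj_trace AT PH0 (symK_invmx KH pH)).
rewrite !mxtraceD !raddfN /= (mxtrace_mulC (H0 *m invmx H)) mulmxA mulr2n.
ring.
Qed.

Lemma PH_proj_sqrt A H0 : pd A -> symK H0 -> pd H0 -> is_proj A (H0 *m H0) -> PH K A = H0.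
Proof.
move=> pA KH0 pH0 PH0.
have obj_ge H : symK H -> pd H -> precond_obj A H0 <= precond_obj A H ?= iff (H == H0).
  move=> KH pH; rewrite !(precond_obj_sqr (pd_sym pA) PH0 (proj2 KH0)) //.
  rewrite subrr !mul0mx mxtrace0 addr0; apply/leifP.
  have [->|nz] := eqVneq H H0; first by rewrite subrr !mul0mx mxtrace0 addr0.
  by rewrite ltrDl mxtrace_conj_gt0 ?subr_eq0 1?eq_sym //; apply: pd_invmx.
have precond_symK H : precond_set K H -> symK H by case=> -[HT _] KH.
have precond_H0 : precond_set K H0 by split; [apply: pd_psd | case: KH0].
apply: xget_unique => [|H [[/precond_symK KH pH] H_min]].
  by split=> // H /precond_symK KH pH; apply: (obj_ge H KH pH).1.
have [le_obj eq_obj] := obj_ge H KH pH.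
by apply/eqP; rewrite -eq_obj eq_le le_obj (H_min _ precond_H0 pH0).
Qed.

Lemma PH_sqr_proj A : pd A -> pd (PH K A) /\ is_proj A (PH K A *m PH K A).
Proof.
move=> pA; have [N PN] := proj_exists A; have [KN _] := PN.
have [H0 [pH0 H0N [p H0p]]] := pd_sqrt (proj_pd pA PN).
have KH0 : symK H0 by rewrite H0p; apply: symK_horner.
have PH0 : is_proj A (H0 *m H0) by rewrite H0N.
by rewrite (PH_proj_sqrt pA KH0 pH0 PH0).
Qed.

End PreconditionerProjection.

Unset Implicit Arguments.

Theorem lemmaA3 (R : realType) (d : nat) (K : 'M[R]_d -> Prop) :
  matrix_algebra_set K ->
  [/\ (forall M1 M2 : 'M[R]_d, pd M1 -> pd M2 ->
         PH K (M1 + M2) *m PH K (M1 + M2) =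
         PH K M1 *m PH K M1 + PH K M2 *m PH K M2),
      (forall (M : 'M[R]_d) (c : R), pd M -> 0 < c ->
         PH K (c *: M) *m PH K (c *: M) = c *: (PH K M *m PH K M))
    & (forall A B : 'M[R]_d, pd A -> pd B -> loewner_le A B ->
         loewner_le (PH K A) (PH K B))].
Proof.
case: d K => [|n] K HK.
  by split=> *; rewrite ?flatmx0 //; apply: psd_mx0.
split.
- move=> M1 M2 pM1 pM2; apply: (proj_unique HK (PH_sqr_proj HK (pdD pM1 pM2)).2).
  exact: projD (PH_sqr_proj HK pM1).2 (PH_sqr_proj HK pM2).2.
- move=> M c pM c0; apply: (proj_unique HK (PH_sqr_proj HK (pdZ c0 pM)).2).
  exact: projZ (PH_sqr_proj HK pM).2.
- move=> A B pA pB AB; have [pPA PA] := PH_sqr_proj HK pA.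
  have [pPB PB] := PH_sqr_proj HK pB.
  apply: loewner_le_of_sqr => //; apply: (proj_psd HK AB).
  by have := projD HK PB (projZ HK (-1) PA); rewrite !scaleN1r.
Qed.
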